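(* Let $\mathcal{C}$ be an $[n,k,d]$ linear code over $\mathbb{F}_{q^m}$, $\mathcal{B}$ a basis of $\mathbb{F}_{q^m}$ over $\mathbb{F}_q$, and $u=(i_1,\dots,i_n)\in\{1,\dots,m\}^n$. Then $S_u(\mathcal{C})$ is an $[n,k',d']$ linear code over $\mathbb{F}_q$ with $k'\ge n-m(n-k)$ and $d'\ge d$. Moreover, any decoding algorithm for $\mathcal{C}$ correcting up to $t$ errors can be applied to $S_u(\mathcal{C})$ with the same error-correction capability: if $y\in\mathbb{F}_q^n$ differs from $c\in S_u(\mathcal{C})$ in at most $t$ positions, then inserting zeros at the positions $J_u$ of $y$ and of $c$ and applying $\Phi_{\mathcal{B}}^{-1}$ yields a word of $\mathbb{F}_{q^m}^n$ at Hamming distance at most $t$ from the codeword $\Phi_{\mathcal{B}}^{-1}$(c with zeros inserted) $\in\mathcal{C}$, from which $c$ is recovered.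
   Context: $\phi_{\mathcal{B}}(\sum_ix_ib_i)=(x_1,\dots,x_m)$, $\Phi_{\mathcal{B}}(c_1,\dots,c_n)=(\phi_{\mathcal{B}}(c_1),\dots,\phi_{\mathcal{B}}(c_n))\in\mathbb{F}_q^{nm}$, and $Im_q(\mathcal{C})=\Phi_{\mathcal{B}}(\mathcal{C})$, with positions numbered $1,\dots,nm$. Set $I_u=\{i_1,\ i_2+m,\ i_3+2m,\dots,\ i_n+(n-1)m\}$ and $J_u=\{1,\dots,nm\}\setminus I_u$. For $D\subseteq\mathbb{F}_q^{N}$ and $J\subseteq\{1,\dots,N\}$, $Short_J(D)=\{(x_j)_{j\notin J}:x\in D,\ x_j=0\ \forall j\in J\}$. Define $S_u(\mathcal{C})=Short_{J_u}(Im_q(\mathcal{C}))$. *)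

From HB Require Import structures.
From mathcomp Require Import all_boot all_order all_algebra all_field.
From mathcomp Require Import zify.
Set Implicit Arguments. Unset Strict Implicit. Unset Printing Implicit Defensive.
Import GRing.Theory.
Local Open Scope ring_scope.

Section Codes.

Definition hwt (K : nzRingType) (n : nat) (x : 'rV[K]_n) : nat :=
  #|[set j : 'I_n | x 0 j != 0]|.
Definition hdist (K : nzRingType) (n : nat) (x y : 'rV[K]_n) : nat :=
  #|[set j : 'I_n | x 0 j != y 0 j]|.

Definition is_nkd_code (K : fieldType) (n : nat) (C : {vspace 'rV[K]_n})
    (k d : nat) : Prop :=
  [/\ \dim C = k,
      (exists2 c, c \in C & (c != 0) && (hwt c == d))
    & (forall c, c \in C -> c != 0 -> (d <= hwt c)%N)].

Variables (n m : nat).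

(* 0-based flattening: position (j, i) of F_q^{nm} has number j*m + i
   (i.e. j*m + i + 1 in the paper's 1-based numbering). *)
Lemma flat_lt (j : 'I_n) (i : 'I_m) : (j * m + i < n * m)%N.
Proof.
have hj := ltn_ord j; have hi := ltn_ord i.
have : (j.+1 * m <= n * m)%N by rewrite leq_mul2r hj orbT.
rewrite mulSn; lia.
Qed.
Definition flat (j : 'I_n) (i : 'I_m) : 'I_(n * m) := Ordinal (flat_lt j i).

Lemma block_lt (p : 'I_(n * m)) : (p %/ m < n)%N.
Proof.
have hp := ltn_ord p; move: (nat_of_ord p) hp => q hp.
have hm : (0 < m)%N by case: (posnP m) hp => // ->; rewrite muln0.
by rewrite ltn_divLR.
Qed.
Lemma offset_lt (p : 'I_(n * m)) : (p %% m < m)%N.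
Proof.
have hp := ltn_ord p; move: (nat_of_ord p) hp => q hp.
have hm : (0 < m)%N by case: (posnP m) hp => // ->; rewrite muln0.
by rewrite ltn_mod.
Qed.
Definition block (p : 'I_(n * m)) : 'I_n := Ordinal (block_lt p).
Definition offset (p : 'I_(n * m)) : 'I_m := Ordinal (offset_lt p).

Variables (F : finFieldType) (L : fieldExtType F) (B : m.-tuple L).

Definition Phi (c : 'rV[L]_n) : 'rV[F]_(n * m) :=
  \row_p coord B (offset p) (c 0 (block p)).

Definition Phi_inv (z : 'rV[F]_(n * m)) : 'rV[L]_n :=
  \row_j \sum_(i < m) z 0 (flat j i) *: tnth B i.

Definition Im_q (C : {vspace 'rV[L]_n}) (y : 'rV[F]_(n * m)) : Prop :=
  exists2 c, c \in C & y = Phi c.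

Variable u : 'I_n -> 'I_m.

Definition I_u : {set 'I_(n * m)} := [set flat j (u j) | j : 'I_n].
Definition J_u : {set 'I_(n * m)} := ~: I_u.

(* The positions not in J_u, in increasing order, are flat j (u j), j = 0..n-1;
   restricting a word to them: *)
Definition restr_u (y : 'rV[F]_(n * m)) : 'rV[F]_n := \row_j y 0 (flat j (u j)).

Definition Short_u (D : 'rV[F]_(n * m) -> Prop) (x : 'rV[F]_n) : Prop :=
  exists2 y, D y & (forall p, p \in J_u -> y 0 p = 0) /\ x = restr_u y.

Definition S_u (C : {vspace 'rV[L]_n}) : 'rV[F]_n -> Prop := Short_u (Im_q C).

Definition ins_u (x : 'rV[F]_n) : 'rV[F]_(n * m) :=
  \row_p (if p \in I_u then x 0 (block p) else 0).

End Codes.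

(** The F-linear map [x |-> Phi_inv (ins_u x) = (x_j b_(u j))_j] from F^n to L^n is
    injective and preserves Hamming weights and distances, and S_u(C) is exactly the
    preimage of C under it.  Hence every nonzero word of S_u(C) has weight at least d,
    and a decoder for C decodes S_u(C) through this map.  For the dimension, C is the
    kernel of an L-linear map h : L^n -> L^(n-k); writing the values of h in the basis B
    makes [x |-> h (Phi_inv (ins_u x))] an F-linear map F^n -> F^((n-k) m) whose kernel
    is S_u(C), so rank-nullity gives dim S_u(C) >= n - m (n-k). *)
From HB Require Import structures.
From mathcomp Require Import all_boot all_order all_algebra all_field.
From mathcomp Require Import zify.
Set Implicit Arguments. Unset Strict Implicit. Unset Printing Implicit Defensive.
Import GRing.Theory.
Local Open Scope ring_scope.

Lemma dim_lker_ge (K : fieldType) (aT rT : vectType K) (f : 'Hom(aT, rT)) :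
  (dim aT - dim rT <= \dim (lker f))%N.
Proof.
have := limg_ker_dim f fullv; rewrite capfv dimvf.
have := dimvS (subvf (f @: fullv)); rewrite dimvf; lia.
Qed.

Section Flattening.
Variables n m : nat.

Lemma block_flat (j : 'I_n) (i : 'I_m) : block (flat j i) = j.
Proof.
apply: val_inj => /=; have hi := ltn_ord i.
by rewrite divnMDl ?divn_small ?addn0 //; lia.
Qed.

Lemma offset_flat (j : 'I_n) (i : 'I_m) : offset (flat j i) = i.
Proof. by apply: val_inj => /=; rewrite modnMDl modn_small. Qed.

Lemma flat_block_offset (p : 'I_(n * m)) : flat (block p) (offset p) = p.
Proof. by apply: val_inj => /=; rewrite -divn_eq. Qed.

Lemma flat_inj (j j' : 'I_n) (i i' : 'I_m) : flat j i = flat j' i' -> j = j' /\ i = i'.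
Proof.
move=> e; split.
  by rewrite -(block_flat j i) e block_flat.
by rewrite -(offset_flat j i) e offset_flat.
Qed.

Lemma mem_I_u (u : 'I_n -> 'I_m) (j : 'I_n) (i : 'I_m) :
  (flat j i \in I_u u) = (i == u j).
Proof.
apply/imsetP/eqP => [[j' _ /flat_inj [-> ->]] // | ->].
by exists j.
Qed.

End Flattening.

Section Embedding.
Variables (F : finFieldType) (L : fieldExtType F) (m n : nat) (B : m.-tuple L).
Variable u : 'I_n -> 'I_m.
Hypothesis B_basis : basis_of fullv B.

Local Notation emb x := (Phi_inv B (ins_u u x)).

Lemma ins_u_flat (x : 'rV[F]_n) (j : 'I_n) (i : 'I_m) :
  ins_u u x 0 (flat j i) = if i == u j then x 0 j else 0.
Proof. by rewrite mxE mem_I_u block_flat. Qed.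

Lemma restr_ins_u (x : 'rV[F]_n) : restr_u u (ins_u u x) = x.
Proof. by apply/rowP => j; rewrite mxE ins_u_flat eqxx. Qed.

Lemma ins_restr_u (y : 'rV[F]_(n * m)) :
  (forall p, p \in J_u u -> y 0 p = 0) -> ins_u u (restr_u u y) = y.
Proof.
move=> yJ0; apply/rowP => p; rewrite -(flat_block_offset p) ins_u_flat.
case: eqP => [->|ne]; first by rewrite mxE.
by rewrite yJ0 // inE mem_I_u; apply/eqP.
Qed.

Lemma emb_entry (x : 'rV[F]_n) (j : 'I_n) : emb x 0 j = x 0 j *: tnth B (u j).
Proof.
rewrite mxE (bigD1 (u j)) //= ins_u_flat eqxx big1 ?addr0 // => i /negbTE ne.
by rewrite ins_u_flat ne scale0r.
Qed.

Lemma embP (a : F) (x y : 'rV[F]_n) : emb (a *: x + y) = a%:A *: emb x + emb y.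
Proof.
apply/rowP => j; rewrite emb_entry [RHS]mxE [X in _ = X + _]mxE !emb_entry !mxE.
by rewrite mulr_algl scalerA scalerDl.
Qed.

Lemma Phi_invK (z : 'rV[F]_(n * m)) : Phi B (Phi_inv B z) = z.
Proof.
apply/rowP => p; rewrite !mxE.
under eq_bigr do rewrite (tnth_nth 0).
by rewrite coord_sum_free ?(basis_free B_basis) // flat_block_offset.
Qed.

Lemma PhiK (c : 'rV[L]_n) : Phi_inv B (Phi B c) = c.
Proof.
apply/rowP => j; rewrite !mxE [RHS](coord_basis B_basis (memvf (c 0 j))).
by apply: eq_bigr => i _; rewrite mxE block_flat offset_flat (tnth_nth 0).
Qed.

Lemma embK (x : 'rV[F]_n) : restr_u u (Phi B (emb x)) = x.
Proof. by rewrite Phi_invK restr_ins_u. Qed.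

Lemma emb_eq0 (x : 'rV[F]_n) : (emb x == 0) = (x == 0).
Proof.
have emb0 : emb 0 = 0 by apply/rowP => j; rewrite emb_entry !mxE scale0r.
by rewrite -emb0; apply/eqP/eqP => [/(congr1 (restr_u u \o Phi B))|->]; rewrite /= ?embK.
Qed.

Lemma S_uP (C : {vspace 'rV[L]_n}) (x : 'rV[F]_n) : S_u B u C x <-> emb x \in C.
Proof.
split => [[_ [c cC ->] [cJ0 ->]] | xC].
  by rewrite ins_restr_u // PhiK.
exists (ins_u u x); first by exists (emb x); rewrite ?Phi_invK.
split; last by rewrite restr_ins_u.
by move=> p; rewrite inE mxE => /negbTE ->.
Qed.

Lemma tnth_basis_neq0 (i : 'I_m) : tnth B i != 0.
Proof. by rewrite (free_not0 (basis_free B_basis)) ?mem_tnth. Qed.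

Lemma hwt_emb (x : 'rV[F]_n) : hwt (emb x) = hwt x.
Proof.
apply: eq_card => j; rewrite !inE emb_entry.
by rewrite scaler_eq0 negb_or tnth_basis_neq0 andbT.
Qed.

Lemma hdist_emb (x y : 'rV[F]_n) : hdist (emb x) (emb y) = hdist x y.
Proof.
apply: eq_card => j; rewrite !inE !emb_entry -subr_eq0 -scalerBl.
by rewrite scaler_eq0 (negbTE (tnth_basis_neq0 _)) orbF subr_eq0.
Qed.

Section Preimage.
Variables (r : nat) (h : 'rV[L]_n -> 'rV[L]_r).
Hypothesis h_linear : linear h.

Definition preim_coord (x : 'rV[F]_n) : 'M[F]_(r, m) :=
  \matrix_(l, i) coord B i (h (emb x) 0 l).

Lemma preim_coord_is_linear : linear preim_coord.
Proof.
move=> a x y; apply/matrixP => l i.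
by rewrite !mxE embP h_linear !mxE mulr_algl linearP.
Qed.

HB.instance Definition _ :=
  GRing.isLinear.Build F 'rV[F]_n 'M[F]_(r, m) _ preim_coord preim_coord_is_linear.

Definition preim_space : {vspace 'rV[F]_n} := lker (linfun preim_coord).

Lemma mem_preim_space (x : 'rV[F]_n) : (x \in preim_space) = (h (emb x) == 0).
Proof.
rewrite memv_ker lfunE; apply/eqP/eqP => hx0; last first.
  by apply/matrixP => l i; rewrite !mxE hx0 mxE linear0.
apply/rowP => l; rewrite mxE (coord_basis B_basis (memvf (h (emb x) 0 l))).
apply: big1 => i _; have /matrixP/(_ l i) := hx0.
by rewrite !mxE => ->; rewrite scale0r.
Qed.

Lemma dim_preim_space : (n - r * m <= \dim preim_space)%N.
Proof. by have := dim_lker_ge (linfun preim_coord); rewrite /dim /= mul1n. Qed.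

End Preimage.
End Embedding.

Section ComplementCoordinates.
Variables (K : fieldType) (n : nat) (C : {vspace 'rV[K]_n}).

Definition compl_coord (w : 'rV[K]_n) : 'rV[K]_(\dim C^C) :=
  \row_l coord (vbasis C^C) l (w - projv C w).

Lemma compl_coord_is_linear : linear compl_coord.
Proof.
move=> a v w; apply/rowP => l; rewrite !mxE -linearP /= [projv C _]linearP /=.
by rewrite scalerBr opprD addrACA.
Qed.

Lemma compl_coord_eq0 (w : 'rV[K]_n) : (compl_coord w == 0) = (w \in C).
Proof.
apply/eqP/idP => [hw0 | wC]; last first.
  by apply/rowP => l; rewrite !mxE projv_id // subrr linear0.
suff /eqP : w - projv C w = 0 by rewrite subr_eq0 => /eqP ->; apply: memv_proj.
rewrite (coord_vbasis (memv_projC C w)); apply: big1 => l _.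
by have /rowP/(_ l) := hw0; rewrite !mxE => ->; rewrite scale0r.
Qed.

End ComplementCoordinates.

Theorem proposition4 (F : finFieldType) (L : fieldExtType F) (m : nat)
    (B : m.-tuple L) (n k d : nat) (C : {vspace 'rV[L]_n}) (u : 'I_n -> 'I_m) :
  basis_of fullv B ->
  is_nkd_code C k d ->
  (exists S : {vspace 'rV[F]_n},
      [/\ forall x, x \in S <-> S_u B u C x,
          (n - m * (n - k) <= \dim S)%N
        & forall x, x \in S -> x != 0 -> (d <= hwt x)%N])
  /\
  (forall (t : nat) (Dec : 'rV[L]_n -> 'rV[L]_n),
      (forall c w, c \in C -> (hdist w c <= t)%N -> Dec w = c) ->
      forall (c y : 'rV[F]_n), S_u B u C c -> (hdist y c <= t)%N ->
      [/\ Phi_inv B (ins_u u c) \in C,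
          (hdist (Phi_inv B (ins_u u y)) (Phi_inv B (ins_u u c)) <= t)%N
        & restr_u u (Phi B (Dec (Phi_inv B (ins_u u y)))) = c]).
Proof.
move=> B_basis [dimC _ C_wt].
have S_uC := S_uP u B_basis C.
pose S := preim_space B u (compl_coord C).
have memS x : x \in S <-> S_u B u C x.
  by rewrite (mem_preim_space _ _ (compl_coord_is_linear C)) // compl_coord_eq0 S_uC.
split.
  exists S; split => // [|x /memS /S_uC xC x_neq0].
    apply: leq_trans (dim_preim_space B u (compl_coord C)).
    by rewrite dimv_compl dimvf /dim /= mul1n dimC mulnC.
  by rewrite -(hwt_emb u B_basis) C_wt // (emb_eq0 u B_basis).
move=> t Dec Dec_correct c y /S_uC cC yc_t.
have emb_t : (hdist (Phi_inv B (ins_u u y)) (Phi_inv B (ins_u u c)) <= t)%N.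
  by rewrite (hdist_emb u B_basis).
by split => //; rewrite (Dec_correct _ _ cC emb_t) (embK u B_basis).
Qed.
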